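(* Let $\mathscr{C}=\{C_k\}_{k\in I}$ be a polycylinder packing of $\mathbb{R}^{n+2}$, fix distinct $i,j\in I$, and let $x$ be a point of the core $a_i$ of $C_i$. Let $y$ and $z$ be points on the circle $S_x(2/\sqrt{3})$. If each of $y$ and $z$ is equidistant from $C_i$ and $C_j$, then the angle $\angle yxz$ is at most $2\arccos(\sqrt{3}-1)\approx 85.8828^\circ$.
   Context: A polycylinder is a subset of $\mathbb{R}^{n+2}$ isometric to $\mathbb{D}^2\times\mathbb{R}^n$, where $\mathbb{D}^2$ is the closed unit disk. A polycylinder packing of $\mathbb{R}^{n+2}$ is a countable family of polycylinders with mutually disjoint interiors. The core $a_k$ of a polycylinder $C_k$ is the $n$-dimensional affine subspace such that $C_k$ is the set of points at distance at most $1$ from $a_k$. For $x\in a_i$, $p_x$ is the $2$-dimensional affine plane through $x$ orthogonal to $a_i$, and $S_x(r)$ denotes the circle of radius $r$ in $p_x$ centered at $x$. *)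

From HB Require Import structures.
From mathcomp Require Import all_boot all_order all_algebra.
From mathcomp Require Import all_classical all_reals all_analysis.
Set Implicit Arguments. Unset Strict Implicit. Unset Printing Implicit Defensive.
Import Order.TTheory GRing.Theory Num.Theory.
Import numFieldNormedType.Exports.
Local Open Scope classical_set_scope.
Local Open Scope ring_scope.

Section Polycylinders.
Variable R : realType.

Definition dotp (m : nat) (u v : 'rV[R]_m) : R := \sum_(i < m) u 0 i * v 0 i.
Definition enorm (m : nat) (u : 'rV[R]_m) : R := Num.sqrt (dotp u u).

Definition set_dist (m : nat) (p : 'rV[R]_m) (A : set 'rV[R]_m) : R :=
  inf [set enorm (p - q) | q in A].

(* An n-dimensional affine subspace of R^(n+2): c + rowspace U,
   U having n orthonormal rows. *)
Definition orthonormal_rows (n m : nat) (U : 'M[R]_(n, m)) : Prop :=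
  U *m U^T = 1%:M.

Definition core (n : nat) (c : 'rV[R]_(n.+2)) (U : 'M[R]_(n, n.+2))
  : set 'rV[R]_(n.+2) := [set c + v *m U | v in [set: 'rV[R]_n]].

Definition polycyl (n : nat) (c : 'rV[R]_(n.+2)) (U : 'M[R]_(n, n.+2))
  : set 'rV[R]_(n.+2) :=
  [set p | exists2 q, core c U q & enorm (p - q) <= 1].

Definition polycyl_packing (n : nat) (I : countType)
  (c : I -> 'rV[R]_(n.+2)) (U : I -> 'M[R]_(n, n.+2)) : Prop :=
  (forall k, orthonormal_rows (U k)) /\
  (forall k l, k <> l ->
     interior (polycyl (c k) (U k)) `&` interior (polycyl (c l) (U l)) = set0).

(* S_x(r): circle of radius r centered at x in the 2-plane p_x through x
   orthogonal to the core directions (rows of U) *)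
Definition circle_Sx (n : nat) (U : 'M[R]_(n, n.+2)) (x : 'rV[R]_(n.+2)) (r : R)
  : set 'rV[R]_(n.+2) :=
  [set y | (forall k : 'I_n, dotp (y - x) (row k U) = 0) /\ enorm (y - x) = r].

Definition angle (m : nat) (y x z : 'rV[R]_m) : R :=
  acos (dotp (y - x) (z - x) / (enorm (y - x) * enorm (z - x))).

End Polycylinders.

From HB Require Import structures.
From mathcomp Require Import all_boot all_order all_algebra.
From mathcomp Require Import all_classical all_reals all_analysis.
From mathcomp Require Import ring lra.
Import Order.TTheory GRing.Theory Num.Theory.
Import numFieldNormedType.Exports.
Local Open Scope classical_set_scope.
Local Open Scope ring_scope.

(* Put r = 2 / sqrt 3.  As x lies on the core of C_i, the points y and z are
   at distance at most r - 1 from C_i, hence from C_j, so they lie within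
   (almost) r of points w, w' of the core of C_j.  The midpoint of w and w' is
   on that core too, and distinct cores of a packing are at distance at least 2,
   so the midpoint of y and z is at distance at least 2 - r = (sqrt 3 - 1) r
   from x.  For two vectors of length r this means
   cos (yxz) >= 2 (sqrt 3 - 1)^2 - 1 = cos (2 acos (sqrt 3 - 1)). *)

Section Euclidean.
Context {R : realType} {m : nat}.
Implicit Types u v w : 'rV[R]_m.

Lemma dotpC u v : dotp u v = dotp v u.
Proof. by apply: eq_bigr => i _; rewrite mulrC. Qed.

Lemma dotpDl u v w : dotp (u + v) w = dotp u w + dotp v w.
Proof. by rewrite /dotp -big_split; apply: eq_bigr => i _; rewrite !mxE mulrDl. Qed.

Lemma dotpZl (a : R) u v : dotp (a *: u) v = a * dotp u v.
Proof. by rewrite /dotp mulr_sumr; apply: eq_bigr => i _; rewrite !mxE mulrA. Qed.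

Lemma dotpZr (a : R) u v : dotp u (a *: v) = a * dotp u v.
Proof. by rewrite dotpC dotpZl dotpC. Qed.

Lemma dotpDD u v : dotp (u + v) (u + v) = dotp u u + 2 * dotp u v + dotp v v.
Proof. by rewrite !dotpDl ![dotp _ (u + v)]dotpC !dotpDl (dotpC v u); ring. Qed.

Lemma dotpp_ge0 u : 0 <= dotp u u.
Proof. by apply: sumr_ge0 => i _; rewrite -expr2 sqr_ge0. Qed.

Lemma enorm_ge0 u : 0 <= enorm u.
Proof. exact: sqrtr_ge0. Qed.

Lemma enorm_sqr u : enorm u ^+ 2 = dotp u u.
Proof. by rewrite sqr_sqrtr // dotpp_ge0. Qed.

Lemma enormZ (a : R) u : enorm (a *: u) = `|a| * enorm u.
Proof.
by rewrite /enorm dotpZl dotpZr mulrA -expr2 sqrtrM ?sqr_ge0 // sqrtr_sqr.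
Qed.

Lemma enormN u : enorm (- u) = enorm u.
Proof. by rewrite -scaleN1r enormZ normrN normr1 mul1r. Qed.

Lemma enormB u v : enorm (u - v) = enorm (v - u).
Proof. by rewrite -enormN opprB. Qed.

Lemma enorm0 : enorm (0 : 'rV[R]_m) = 0.
Proof. by rewrite -(scale0r 0) enormZ normr0 mul0r. Qed.

(* The discriminant of the nonnegative quadratic [t |-> dotp (u + t v) (u + t v)]. *)
Lemma dotp_sqr_le u v : dotp u v ^+ 2 <= dotp u u * dotp v v.
Proof.
set A := dotp u u; set B := dotp u v; set C := dotp v v.
have quad t : 0 <= A + 2 * t * B + t ^+ 2 * C.
  have := dotpp_ge0 (u + t *: v).
  by rewrite dotpDD !dotpZl !dotpZr -/A -/B -/C; nra.
have A0 : 0 <= A by exact: dotpp_ge0.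
have [C0|C_le0] := ltrP 0 C.
  have := quad (- B / C).
  have -> : A + 2 * (- B / C) * B + (- B / C) ^+ 2 * C = A - B ^+ 2 / C.
    by field; rewrite gt_eqF.
  by rewrite subr_ge0 ler_pdivrMr //; lra.
have C_eq0 : C = 0 by apply/eqP; rewrite eq_le C_le0 dotpp_ge0.
have [->|B_neq0] := eqVneq B 0; first by rewrite C_eq0; nra.
have := quad (- (A + 1) / (2 * B)).
have -> : A + 2 * (- (A + 1) / (2 * B)) * B = -1 by field.
by rewrite C_eq0 mulr0 addr0; lra.
Qed.

Lemma dotp_le_enorm u v : dotp u v <= enorm u * enorm v.
Proof.
have := dotp_sqr_le u v; rewrite -!enorm_sqr -exprMn.
have : 0 <= enorm u * enorm v by rewrite mulr_ge0 ?enorm_ge0.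
by set a := enorm u * enorm v; nra.
Qed.

Lemma enormD u v : enorm (u + v) <= enorm u + enorm v.
Proof.
rewrite -ler_sqr ?nnegrE ?addr_ge0 ?enorm_ge0 //.
rewrite enorm_sqr dotpDD sqrrD !enorm_sqr mulr2n.
by have := dotp_le_enorm u v; lra.
Qed.

Lemma enorm_le_mx_norm u : enorm u <= m%:R * `|u|.
Proof.
have coord k : `|u 0 k| <= `|u|.
  rewrite [X in _ <= X]mx_normrE.
  exact: (le_bigmax _ (fun ij : 'I_1 * 'I_m => `|u ij.1 ij.2|) (ord0, k)).
rewrite -[_ * _]ger0_norm ?mulr_ge0 // -sqrtr_sqr ler_sqrt ?sqr_ge0 //.
apply: (@le_trans _ _ (\sum_(k < m) `|u| ^+ 2)).
  apply: ler_sum => k _; rewrite -expr2 -real_normK ?num_real //.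
  by rewrite lerXn2r ?nnegrE ?coord.
rewrite sumr_const card_ord exprMn -[_ *+ m]mulr_natl.
apply: ler_wpM2r; first exact: sqr_ge0.
by rewrite -natrX ler_nat; case: (m) => // k; rewrite expnS leq_pmulr ?expn_gt0.
Qed.

Lemma has_lbound_dist (p : 'rV[R]_m) (A : set 'rV[R]_m) :
  has_lbound [set enorm (p - q) | q in A].
Proof. by exists 0 => _ [q _ <-]; exact: enorm_ge0. Qed.

End Euclidean.

Section Polycylinder.
Context {R : realType} {n : nat} {c : 'rV[R]_(n.+2)} {U : 'M[R]_(n, n.+2)}.

Lemma core_midpoint w w' :
  core c U w -> core c U w' -> core c U (2^-1 *: (w + w')).
Proof.
move=> [v _ <-] [v' _ <-]; exists (2^-1 *: (v + v')) => //.
by rewrite -scalemxAl mulmxDl; apply/rowP => k; rewrite !mxE; field.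
Qed.

Lemma polycyl_interior a q :
  core c U a -> enorm (q - a) < 1 -> interior (polycyl c U) q.
Proof.
move=> core_a qa_lt1; set d := 1 - enorm (q - a).
have d_gt0 : 0 < d by rewrite subr_gt0.
apply/nbhs_ballP; exists (d / n.+2%:R); first by rewrite /= divr_gt0.
move=> p /=; rewrite -ball_normE /= => qp_lt; exists a => //.
have pq_le : enorm (p - q) <= d.
  apply: le_trans (enorm_le_mx_norm (p - q)) _.
  by rewrite -normrN opprB -ler_pdivlMl ?ltr0n // mulrC ltW.
have := enormD (p - q) (q - a); rewrite addrA subrK; rewrite /d in pq_le; lra.
Qed.

Lemma set_dist_polycyl_le x p :
  core c U x -> 1 <= enorm (p - x) ->
  set_dist p (polycyl c U) <= enorm (p - x) - 1.
Proof.
move=> core_x px_ge1; set r := enorm (p - x) in px_ge1 *.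
have r_gt0 : 0 < r by lra.
(* [q] is where the segment from [x] to [p] leaves the polycylinder. *)
pose q := x + r^-1 *: (p - x).
apply: (ge_inf (has_lbound_dist p _)); exists q.
  exists x => //; rewrite /q addrC addKr enormZ -/r ger0_norm ?invr_ge0 ?(ltW r_gt0) //.
  by rewrite mulVf ?gt_eqF.
rewrite (_ : p - q = (1 - r^-1) *: (p - x)); last first.
  by apply/rowP => k; rewrite !mxE; field; rewrite gt_eqF.
rewrite enormZ -/r ger0_norm; first by field; rewrite gt_eqF.
by rewrite subr_ge0 invr_le1 ?unitfE ?gt_eqF.
Qed.

Lemma set_dist_polycyl_lt p t :
  set_dist p (polycyl c U) < t -> exists2 w, core c U w & enorm (p - w) < t + 1.
Proof.
move=> dist_lt.
have c_core : core c U c by exists 0 => //; rewrite mul0mx addr0.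
have inf_ok : has_inf [set enorm (p - q) | q in polycyl c U].
  split; last exact: has_lbound_dist.
  by exists (enorm (p - c)), c => //; exists c; rewrite // subrr enorm0.
have eps_gt0 : 0 < t - set_dist p (polycyl c U) by rewrite subr_gt0.
have [_ [q [w core_w qw_le1] <-] pq_lt] := inf_adherent eps_gt0 inf_ok.
exists w => //; have := enormD (p - q) (q - w).
rewrite addrA subrK; rewrite /set_dist in dist_lt pq_lt; lra.
Qed.

End Polycylinder.

Section Packing.
Context {R : realType} {n : nat} {I : countType}.
Context {c : I -> 'rV[R]_(n.+2)} {U : I -> 'M[R]_(n, n.+2)}.
Hypothesis packing : polycyl_packing c U.

(* Otherwise the midpoint of two core points would be interior to both polycylinders. *)
Lemma packing_core_dist k l w w' :
  k <> l -> core (c k) (U k) w -> core (c l) (U l) w' -> 2 <= enorm (w - w').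
Proof.
move=> kl core_w core_w'; rewrite leNgt; apply/negP => ww'_lt2.
have [_ /(_ k l kl) /seteqP [disj _]] := packing.
apply: (disj (2^-1 *: (w + w'))); split.
- apply: (polycyl_interior _ _ core_w).
  rewrite (_ : _ - w = 2^-1 *: (w' - w)); last by apply/rowP => t; rewrite !mxE; field.
  by rewrite enormZ enormB ger0_norm //; lra.
- apply: (polycyl_interior _ _ core_w').
  rewrite (_ : _ - w' = 2^-1 *: (w - w')); last by apply/rowP => t; rewrite !mxE; field.
  by rewrite enormZ ger0_norm //; lra.
Qed.

Lemma equidistant_midpoint_far i j x y z r :
  i <> j -> core (c i) (U i) x -> 1 <= r ->
  enorm (y - x) = r -> enorm (z - x) = r ->
  set_dist y (polycyl (c i) (U i)) = set_dist y (polycyl (c j) (U j)) ->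
  set_dist z (polycyl (c i) (U i)) = set_dist z (polycyl (c j) (U j)) ->
  2 - r <= enorm (2^-1 *: (y + z) - x).
Proof.
move=> ij core_x r_ge1 yx_r zx_r eq_y eq_z.
have near_j p : enorm (p - x) = r ->
    set_dist p (polycyl (c i) (U i)) = set_dist p (polycyl (c j) (U j)) ->
    forall e, 0 < e -> exists2 w, core (c j) (U j) w & enorm (p - w) < r + e.
  move=> px_r eq_p e e_gt0.
  have pi_le : set_dist p (polycyl (c i) (U i)) <= r - 1.
    by rewrite -px_r; apply: set_dist_polycyl_le; rewrite ?px_r.
  have [w core_w pw_lt] := @set_dist_polycyl_lt _ _ (c j) (U j) p (r - 1 + e) ltac:(lra).
  by exists w => //; lra.
apply/ler_addgt0Pr => e e_gt0.
have [w core_w yw_lt] := near_j y yx_r eq_y e e_gt0.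
have [w' core_w' zw'_lt] := near_j z zx_r eq_z e e_gt0.
have := packing_core_dist _ _ _ _ (nesym ij) (core_midpoint _ _ core_w core_w') core_x.
rewrite (_ : _ - x = 2^-1 *: (y + z) - x + 2^-1 *: ((w - y) + (w' - z))); last first.
  by apply/rowP => t; rewrite !mxE; field.
move/le_trans/(_ (enormD _ _)); rewrite enormZ ger0_norm //.
have := enormD (w - y) (w' - z); rewrite enormB [enorm (w' - z)]enormB; lra.
Qed.

End Packing.

Lemma acos_le_acos (R : realType) (a b : R) :
  -1 <= a -> a <= b -> b <= 1 -> acos b <= acos a.
Proof.
move=> a_ge ab b_le.
have a_in : -1 <= a <= 1 by apply/andP; split; lra.
have b_in : -1 <= b <= 1 by apply/andP; split; lra.
rewrite leNgt -ltr_cos ?in_itv /= ?acos_ge0 ?acos_lepi //.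
by rewrite !acosK ?in_itv //= -leNgt.
Qed.

Lemma acos_le_2acos (R : realType) (a k : R) :
  0 <= a <= 1 -> 2 * a ^+ 2 - 1 <= k -> k <= 1 -> acos k <= 2 * acos a.
Proof.
move=> /andP[a_ge0 a_le1] k_ge k_le1.
have a_in : -1 <= a <= 1 by apply/andP; split; lra.
have a_le_half : acos a <= pi / 2.
  by rewrite -[pi / 2]acos0; apply: acos_le_acos; lra.
have a2_in : 2 * acos a \in `[0, pi].
  by rewrite in_itv /= mulr_ge0 ?acos_ge0 //; lra.
have cos_2a : cos (2 * acos a) = 2 * a ^+ 2 - 1.
  by rewrite mulr_natl cos_mulr2n acosK ?in_itv // mulr_natl.
rewrite -(cosK a2_in) cos_2a; apply: acos_le_acos => //; nra.
Qed.

Lemma angle_le_2acos (R : realType) (m : nat) (x y z : 'rV[R]_m) (r a : R) :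
  0 < r -> 0 <= a <= 1 -> enorm (y - x) = r -> enorm (z - x) = r ->
  a * r <= enorm (2^-1 *: (y + z) - x) -> angle y x z <= 2 * acos a.
Proof.
move=> r_gt0 a_in yx_r zx_r mid_ge; have /andP[a_ge0 _] := a_in.
rewrite (_ : _ - x = 2^-1 *: ((y - x) + (z - x))) in mid_ge; last first.
  by apply/rowP => k; rewrite !mxE; field.
rewrite /angle yx_r zx_r; apply: acos_le_2acos => //.
- have : (a * r) ^+ 2 <= enorm (2^-1 *: (y - x + (z - x))) ^+ 2.
    by rewrite lerXn2r ?nnegrE ?mulr_ge0 ?enorm_ge0 ?(ltW r_gt0).
  rewrite enormZ !exprMn enorm_sqr dotpDD -!enorm_sqr yx_r zx_r ger0_norm //.
  by rewrite ler_pdivlMr ?mulr_gt0 //; nra.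
- by rewrite ler_pdivrMr ?mulr_gt0 // mul1r -{1}yx_r -zx_r dotp_le_enorm.
Qed.

Theorem mainTheorem6 (R : realType) (n : nat) (I : countType)
  (c : I -> 'rV[R]_(n.+2)) (U : I -> 'M[R]_(n, n.+2))
  (i j : I) (x y z : 'rV[R]_(n.+2)) :
  polycyl_packing c U ->
  i <> j ->
  core (c i) (U i) x ->
  circle_Sx (U i) x (2 / Num.sqrt 3) y ->
  circle_Sx (U i) x (2 / Num.sqrt 3) z ->
  set_dist y (polycyl (c i) (U i)) = set_dist y (polycyl (c j) (U j)) ->
  set_dist z (polycyl (c i) (U i)) = set_dist z (polycyl (c j) (U j)) ->
  angle y x z <= 2 * acos (Num.sqrt 3 - 1).
Proof.
move=> packing ij core_x [_ yx_r] [_ zx_r] eq_y eq_z.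
set s := Num.sqrt 3 in yx_r zx_r *.
have s_gt0 : 0 < s by rewrite sqrtr_gt0.
have s_sqr : s ^+ 2 = 3 by rewrite sqr_sqrtr.
have s_gt1 : 1 < s by nra.
apply: (@angle_le_2acos _ _ x y z (2 / s)) => //.
- by rewrite divr_gt0.
- by apply/andP; split; nra.
(* For [r = 2 / sqrt 3] the bound [2 - r] is exactly [(sqrt 3 - 1) * r]. *)
- rewrite mulrBl mulrC mulfVK ?gt_eqF // mul1r.
  apply: (equidistant_midpoint_far packing _ _ _ _ _ _ ij core_x) => //.
  by rewrite ler_pdivlMr // mul1r; nra.
Qed.
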